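(* Let $T$ be a tree with at least two vertices. The following are equivalent. (1) $T$ is always solvable. (2) Either there are disjoint always solvable trees $T_1,T_2$ and vertices $u\in V(T_1)$, $w\in V(T_2)$ with $\mathcal{A}_{T_1}(u)=0$, $\mathcal{A}_{T_2}(w)=1$ such that $T=T_1uwT_2$; or there are pairwise disjoint always solvable trees $T_1,T_2,T_3$ and vertices $x\in V(T_1)$, $y\in V(T_2)$, $z\in V(T_3)$ with $\mathcal{A}_{T_1}(x)=\mathcal{A}_{T_2}(y)=\mathcal{A}_{T_3}(z)=1$ such that $T$ is obtained from the disjoint union $T_1\cup T_2\cup T_3$ by adding the edges $xy$ and $yz$. (3) Either there are disjoint always solvable trees $T_1,T_2$ and vertices $u\in V(T_1)$, $w\in V(T_2)$ with $\mathcal{A}_{T_1}(u)=0$, $\mathcal{A}_{T_2}(w)=1$ such that $T=T_1uwT_2$; or there are pairwise disjoint always solvable trees $T_1,T_2,T_3$ and vertices $a\in V(T_1)$, $b\in V(T_2)$ with $\mathcal{A}_{T_1}(a)=\mathcal{A}_{T_2}(b)=1$, such that, setting $X:=T_1abT_2$, there are vertices $y\in V(T_3)$ and $x\in V(X)$ with $\mathcal{A}_{T_3}(y)=1$, $\mathcal{A}_X(x)=-1$ and $T=T_3yxX$.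
   Context: For a finite simple graph $G$ with vertex set $\{v_1,\dots,v_n\}$, the closed adjacency matrix $N(G)$ is the $n\times n$ matrix over $\mathbb{Z}_2$ whose $(i,j)$ entry is $1$ iff $i=j$ or $v_i$ is adjacent to $v_j$. Vectors in $\mathbb{Z}_2^{V(G)}$ are called patterns/configurations; a pattern $\mathbf{p}$ solves a configuration $\mathbf{c}$ if $N(G)\mathbf{p}=\mathbf{c}$. The nullity is $\nu(G):=\dim\operatorname{Ker}(N(G))$; elements of $\operatorname{Ker}(N(G))$ are null patterns; $G$ is always solvable if $\nu(G)=0$. $\mathbf{1}$ is the all-ones configuration; it is solvable on every graph. A vertex $v$ is half-activated if $\boldsymbol{\ell}(v)=1$ for some null pattern $\boldsymbol{\ell}$; otherwise it is always-activated if $\mathbf{p}(v)=1$ for every $\mathbf{p}$ with $N(G)\mathbf{p}=\mathbf{1}$, and never-activated if $\mathbf{p}(v)=0$ for every such $\mathbf{p}$. The activation number $\mathcal{A}_G(v)$ is $1$, $0$, $-1$ if $v$ is always-activated, never-activated, half-activated respectively. For disjoint graphs $G_1,G_2$ and $u\in V(G_1)$, $w\in V(G_2)$, $G_1uwG_2$ denotes the graph obtained from the disjoint union $G_1\cup G_2$ by adding the edge $uw$. *)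

From HB Require Import structures.
From mathcomp Require Import all_boot all_order all_algebra.
Set Implicit Arguments. Unset Strict Implicit. Unset Printing Implicit Defensive.
Import GRing.Theory.
Local Open Scope ring_scope.

Section Graphs.
Variable V : finType.
Variable e : rel V.

Definition simple_graph : Prop := symmetric e /\ irreflexive e.

Definition connected_graph : Prop := forall x y : V, connect e x y.

Definition acyclic_graph : Prop :=
  forall c : seq V, (3 <= size c)%N -> uniq c -> ~~ cycle e c.

Definition is_tree : Prop := (0 < #|V|)%N /\ connected_graph /\ acyclic_graph.

Definition closed_adj : 'M['F_2]_#|V| :=
  \matrix_(i, j) (if (i == j) || e (enum_val i) (enum_val j) then 1 else 0).

(* nullity = dim Ker N(G) (column kernel {p | N p = 0}) *)
Definition nullity : nat := \rank (kermx closed_adj^T).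

Definition always_solvable : Prop := nullity = 0%N.

Definition pat_at (p : 'cV['F_2]_#|V|) (v : V) : 'F_2 := p (enum_rank v) ord0.

Definition half_activated (v : V) : bool :=
  [exists p : 'cV['F_2]_#|V|, (closed_adj *m p == 0) && (pat_at p v == 1)].

Definition always_activated (v : V) : bool :=
  ~~ half_activated v &&
  [forall p : 'cV['F_2]_#|V|, (closed_adj *m p == const_mx 1) ==> (pat_at p v == 1)].

Definition never_activated (v : V) : bool :=
  ~~ half_activated v &&
  [forall p : 'cV['F_2]_#|V|, (closed_adj *m p == const_mx 1) ==> (pat_at p v == 0)].

Definition activation (v : V) : int :=
  if half_activated v then (-1)%R
  else if always_activated v then 1%R
  else if never_activated v then 0%R else 0%R.

End Graphs.

Definition induced (V : finType) (e : rel V) (S : {set V}) : rel {x : V | x \in S} :=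
  fun x y => e (val x) (val y).
Arguments induced [V] e S _ _.

Definition ind_tree (V : finType) (e : rel V) (S : {set V}) : Prop :=
  is_tree (induced e S).

Definition ind_always_solvable (V : finType) (e : rel V) (S : {set V}) : Prop :=
  always_solvable (induced e S).

(* activation number of v in G[S] (v is assumed to lie in S; 0 otherwise) *)
Definition ind_activation (V : finType) (e : rel V) (S : {set V}) (v : V) : int :=
  match (insub v : option {x : V | x \in S}) with
  | Some x => activation (induced e S) x
  | None => 0%R
  end.

Definition only_edge (V : finType) (e : rel V) (A B : {set V}) (a b : V) : Prop :=
  forall x y, x \in A -> y \in B -> e x y = (x == a) && (y == b).

Definition no_edge (V : finType) (e : rel V) (A B : {set V}) : Prop :=
  forall x y, x \in A -> y \in B -> e x y = false.

(* T = T1 u w T2 with T1 = T[V1], T2 = T[V2] always solvable trees,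
   A_{T1}(u) = 0, A_{T2}(w) = 1 *)
Definition split_two (V : finType) (e : rel V) : Prop :=
  exists (V1 V2 : {set V}) (u w : V),
    [/\ V1 :&: V2 = set0, V1 :|: V2 = setT, u \in V1, w \in V2 &
    [/\ ind_tree e V1, ind_tree e V2, ind_always_solvable e V1,
        ind_always_solvable e V2 &
    [/\ ind_activation e V1 u = 0%R, ind_activation e V2 w = 1%R &
        only_edge e V1 V2 u w]]].

Definition three_partition (V : finType) (V1 V2 V3 : {set V}) : Prop :=
  [/\ V1 :&: V2 = set0, V1 :&: V3 = set0, V2 :&: V3 = set0 &
      V1 :|: V2 :|: V3 = setT].

Definition three_trees (V : finType) (e : rel V) (V1 V2 V3 : {set V}) : Prop :=
  [/\ ind_tree e V1, ind_tree e V2, ind_tree e V3 &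
  [/\ ind_always_solvable e V1, ind_always_solvable e V2 &
      ind_always_solvable e V3]].

(* T obtained from T1 ∪ T2 ∪ T3 by adding xy and yz, A(x)=A(y)=A(z)=1 *)
Definition split_path3 (V : finType) (e : rel V) : Prop :=
  exists (V1 V2 V3 : {set V}) (x y z : V),
    [/\ three_partition V1 V2 V3, three_trees e V1 V2 V3,
        [/\ x \in V1, y \in V2 & z \in V3],
        [/\ ind_activation e V1 x = 1%R, ind_activation e V2 y = 1%R &
            ind_activation e V3 z = 1%R] &
        [/\ only_edge e V1 V2 x y, only_edge e V2 V3 y z & no_edge e V1 V3]].

(* X = T1 a b T2, T = T3 y x X with A_{T1}(a)=A_{T2}(b)=A_{T3}(y)=1, A_X(x)=-1 *)
Definition split_X (V : finType) (e : rel V) : Prop :=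
  exists (V1 V2 V3 : {set V}) (a b y x : V),
    [/\ three_partition V1 V2 V3, three_trees e V1 V2 V3,
        [/\ a \in V1, b \in V2, y \in V3 & x \in V1 :|: V2],
        [/\ ind_activation e V1 a = 1%R, ind_activation e V2 b = 1%R,
            ind_activation e V3 y = 1%R &
            ind_activation e (V1 :|: V2) x = (-1)%R] &
        [/\ only_edge e V1 V2 a b & only_edge e V3 (V1 :|: V2) y x]].

(* Over F_2 the closed adjacency matrix N is symmetric with unit diagonal, so
   <q, N q> = <q, 1> for every pattern q.  Hence if N q = e_v, every solution of
   N p = 1 satisfies p v = <N q, p> = <q, 1> = q v: in an always solvable tree the
   activation of v is the v-entry of N^-1 e_v.  If T is glued from T1 and T2 along
   the edge ab, a pattern f is null on T iff N_1 f = f(b) e_a and N_2 f = f(a) e_b,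
   and a case analysis on the values of f at the glued vertices gives (2) => (1)
   and (3) => (1).
   Conversely, let l be a leaf of T with neighbour u.  If T - l is always solvable,
   T = (T - l) u l {l} and A_{T-l}(u) = 0, because a solution of N q = e_u with
   q(u) = 1 extends by l |-> 1 to a null pattern of T.  Otherwise a nonzero null
   pattern k of T - l must have k(u) = 1 (else it extends by zero) and k(c) = 1 for
   some neighbour c of u.  Cutting the edge uc splits T - l into trees C_u, C_c on
   which k solves N k = e_u and N k = e_c; they are always solvable with
   A(u) = A(c) = 1, and A_{C_u c C_c}(u) = -1 is witnessed by k, which gives both
   decompositions {l} l u C_u u c C_c and (C_u u c C_c) u l {l}. *)

From mathcomp Require Import all_boot all_order all_algebra.
From mathcomp Require Import zify.
From Stdlib Require Import Classical.
Set Implicit Arguments. Unset Strict Implicit. Unset Printing Implicit Defensive.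
Import GRing.Theory.
Local Open Scope ring_scope.

Lemma F2_cases (x : 'F_2) : x = 0 \/ x = 1.
Proof. by case: x => [[|[|n]] // H]; [left | right]; apply/val_inj. Qed.

Lemma F2_pchar : (2 \in [pchar 'F_2])%N.
Proof. exact: pchar_Fp. Qed.

Lemma F2_addxx (x : 'F_2) : x + x = 0.
Proof. exact: (@addrr_pchar2 _ F2_pchar). Qed.

Lemma F2_mulxx (x : 'F_2) : x * x = x.
Proof. by case: (F2_cases x) => ->; rewrite ?mul0r ?mul1r. Qed.

Lemma F2_add_eq0 (x y : 'F_2) : x + y = 0 -> x = y.
Proof. by move/eqP; rewrite addr_eq0 (oppr_pchar2 F2_pchar) => /eqP. Qed.

Lemma F2_oner_neq0 : (1 : 'F_2) <> 0.
Proof. by apply/eqP; rewrite oner_eq0. Qed.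

Definition nbsum (V : finType) (e : rel V) (S : {set V}) (f : V -> 'F_2) (v : V) : 'F_2 :=
  \sum_(w in S) (if (v == w) || e v w then f w else 0).

Section NeighbourhoodSums.
Variables (V : finType) (e : rel V).

Definition null_in (S : {set V}) (f : V -> 'F_2) : Prop :=
  forall v, v \in S -> nbsum e S f v = 0.
Definition ones_in (S : {set V}) (f : V -> 'F_2) : Prop :=
  forall v, v \in S -> nbsum e S f v = 1.
Definition point_sol (S : {set V}) (v : V) (s : 'F_2) (f : V -> 'F_2) : Prop :=
  forall w, w \in S -> nbsum e S f w = if w == v then s else 0.
Definition solvable_in (S : {set V}) : Prop :=
  forall f, null_in S f -> forall v, v \in S -> f v = 0.
Definition half_in (S : {set V}) (v : V) : Prop :=
  exists2 f, null_in S f & f v = 1.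
Definition forced_in (S : {set V}) (v : V) : Prop :=
  forall f, ones_in S f -> f v = 1.

Lemma eq_nbsum (S : {set V}) (f g : V -> 'F_2) v :
  {in S, f =1 g} -> nbsum e S f v = nbsum e S g v.
Proof. by move=> fg; apply: eq_bigr => w wS; rewrite fg. Qed.

Lemma nbsumD (S : {set V}) (f g : V -> 'F_2) v :
  nbsum e S (fun w => f w + g w) v = nbsum e S f v + nbsum e S g v.
Proof. by rewrite /nbsum -big_split; apply: eq_bigr => w _ /=; case: ifP; rewrite ?addr0. Qed.

Lemma nbsum_setU (A B : {set V}) (f : V -> 'F_2) v : A :&: B = set0 ->
  nbsum e (A :|: B) f v = nbsum e A f v + nbsum e B f v.
Proof.
move=> AB0; rewrite /nbsum -bigU /=; last by rewrite -setI_eq0 AB0.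
by apply: eq_bigl => w; rewrite !inE.
Qed.

Lemma nbsum_set1 l (f : V -> 'F_2) v :
  nbsum e [set l] f v = if (v == l) || e v l then f l else 0.
Proof. by rewrite /nbsum big_set1. Qed.

Lemma point_sol0 (S : {set V}) v f : point_sol S v 0 f -> null_in S f.
Proof. by move=> Pf w wS; rewrite Pf //; case: ifP. Qed.

Lemma null_inD (S : {set V}) f g : null_in S f -> null_in S g -> null_in S (fun w => f w + g w).
Proof. by move=> Nf Ng v vS; rewrite nbsumD Nf // Ng // addr0. Qed.

Lemma solvable_in_set1 l : solvable_in [set l].
Proof.
by move=> f Nf v /set1P ->; have := Nf l (set11 l); rewrite nbsum_set1 eqxx.
Qed.

Lemma sum_symmetric_diag0 (S : {set V}) (F : V -> V -> 'F_2) :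
  (forall w x, F w x = F x w) -> (forall w, F w w = 0) ->
  \sum_(w in S) \sum_(x in S) F w x = 0.
Proof.
move=> Fsym F0; pose below (w x : V) := (enum_rank x < enum_rank w)%N.
have splitF w x : F w x = (if below w x then F w x else 0) + (if below x w then F w x else 0).
  by rewrite /below; case: ltngtP => [||/val_inj/enum_rank_inj ->]; rewrite ?F0 ?addr0 ?add0r.
under eq_bigr do rewrite (eq_bigr _ (fun x _ => splitF _ x)) big_split.
rewrite big_split /= [X in _ + X]exchange_big /=.
under [X in _ + X]eq_bigr do under eq_bigr do rewrite Fsym.
exact: F2_addxx.
Qed.

Lemma sum_pointE (S : {set V}) v (g : V -> 'F_2) : v \in S ->
  \sum_(w in S) (if w == v then 1 else 0) * g w = g v.
Proof.
move=> vS; rewrite (bigD1 v) //= eqxx mul1r big1 ?addr0 //.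
by move=> x /andP[_ /negbTE ->]; rewrite mul0r.
Qed.

Section Symmetric.
Hypothesis e_sym : symmetric e.

Lemma nbsum_adjoint (S : {set V}) (f g : V -> 'F_2) :
  \sum_(w in S) nbsum e S f w * g w = \sum_(w in S) f w * nbsum e S g w.
Proof.
rewrite /nbsum; transitivity
  (\sum_(w in S) \sum_(x in S) (if (w == x) || e w x then f x * g w else 0)).
  apply: eq_bigr => w _; rewrite big_distrl /=.
  by apply: eq_bigr => x _; case: ifP; rewrite ?mul0r.
rewrite exchange_big; apply: eq_bigr => w _; rewrite big_distrr /=; apply: eq_bigr => x _.
by rewrite (eq_sym x) e_sym; case: ifP; rewrite ?mulr0 // mulrC.
Qed.

Hypothesis e_irr : irreflexive e.

Lemma nbsum_quadratic (S : {set V}) (q : V -> 'F_2) :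
  \sum_(w in S) nbsum e S q w * q w = \sum_(w in S) q w.
Proof.
rewrite /nbsum; transitivity (\sum_(w in S) \sum_(x in S)
  ((if w == x then q x * q w else 0) + (if e w x then q x * q w else 0))).
  apply: eq_bigr => w _; rewrite big_distrl /=; apply: eq_bigr => x _.
  case: eqVneq => [->|_] /=; first by rewrite e_irr addr0.
  by case: ifP; rewrite ?mul0r ?add0r.
under eq_bigr do rewrite big_split.
rewrite big_split /= [X in _ + X]sum_symmetric_diag0 ?addr0; last 2 first.
- by move=> w x; rewrite e_sym mulrC.
- by move=> w; rewrite e_irr.
apply: eq_bigr => w wS; rewrite (bigD1 w) //= eqxx F2_mulxx big1 ?addr0 //.
by move=> x /andP[_ /negbTE]; rewrite eq_sym => ->.
Qed.

(* The image of the symmetric matrix N(G[S]) is orthogonal to its kernel. *)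
Lemma point_sol_null (S : {set V}) v q j :
  v \in S -> point_sol S v 1 q -> null_in S j -> j v = 0.
Proof.
move=> vS Pq Nj; rewrite -(sum_pointE j vS).
under eq_bigr => w wS do rewrite -Pq //.
by rewrite nbsum_adjoint big1 // => w wS; rewrite Nj // mulr0.
Qed.

(* [p v = <N q, p> = <q, N p> = <q, 1> = <q, N q> = q v]. *)
Lemma point_sol_ones (S : {set V}) v q p :
  v \in S -> point_sol S v 1 q -> ones_in S p -> p v = q v.
Proof.
move=> vS Pq Op; rewrite -(sum_pointE p vS) -(sum_pointE q vS).
under eq_bigr => w wS do rewrite -Pq //.
under [RHS]eq_bigr => w wS do rewrite -Pq //.
rewrite nbsum_adjoint nbsum_quadratic.
by apply: eq_bigr => w wS; rewrite Op // mulr1.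
Qed.

End Symmetric.
End NeighbourhoodSums.

Section ClosedAdjacency.
Variables (W : finType) (r : rel W).

Definition col_pat (f : W -> 'F_2) : 'cV['F_2]_#|W| := \col_i f (enum_val i).

Lemma pat_at_col f v : pat_at (col_pat f) v = f v.
Proof. by rewrite /pat_at /col_pat mxE enum_rankK. Qed.

Lemma closed_adj_mulE p i :
  (closed_adj r *m p) i ord0 = nbsum r setT (pat_at p) (enum_val i).
Proof.
rewrite mxE /nbsum (eq_bigl _ _ (fun w => in_setT w)).
rewrite [RHS](reindex (@enum_val W (mem W))) /=; last first.
  by exists enum_rank => w _; [rewrite enum_valK | rewrite enum_rankK].
apply: eq_bigr => j _; rewrite /closed_adj mxE /pat_at enum_valK (inj_eq enum_val_inj).
by case: ifP; rewrite ?mul1r ?mul0r.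
Qed.

Lemma closed_adj_mul_const p c :
  closed_adj r *m p = const_mx c <-> forall v, nbsum r setT (pat_at p) v = c.
Proof.
split => [/matrixP Np v | Np].
  by have := Np (enum_rank v) ord0; rewrite closed_adj_mulE enum_rankK mxE.
by apply/matrixP => i j; rewrite (ord1 j) closed_adj_mulE Np mxE.
Qed.

Lemma always_solvableP : always_solvable r <-> solvable_in r setT.
Proof.
rewrite /always_solvable /nullity; split => [ker0 f Nf v _ | solv].
  have Nf' : closed_adj r *m col_pat f = 0.
    by apply/(closed_adj_mul_const _ 0) => w; under eq_nbsum do rewrite pat_at_col; exact: Nf.
  have : ((col_pat f)^T <= kermx (closed_adj r)^T)%MS by rewrite sub_kermx -trmx_mul Nf' trmx0.
  move/eqP: ker0; rewrite mxrank_eq0 => /eqP ->; rewrite submx0.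
  move=> /eqP/matrixP/(_ ord0 (enum_rank v)).
  by rewrite !mxE enum_rankK.
apply/eqP; rewrite mxrank_eq0; apply/rowV0P => u; rewrite sub_kermx => /eqP uN.
have : closed_adj r *m u^T = const_mx 0 by rewrite -[LHS]trmxK trmx_mul trmxK uN trmx0.
move/closed_adj_mul_const => Nu; apply/matrixP => i j; rewrite (ord1 i) mxE.
by have := solv _ (fun w _ => Nu w) (enum_val j) (in_setT _); rewrite /pat_at enum_valK mxE.
Qed.

Lemma always_solvable_surj : always_solvable r ->
  forall c : W -> 'F_2, exists f, forall v, nbsum r setT f v = c v.
Proof.
rewrite /always_solvable /nullity mxrank_ker => full c.
have : row_full (closed_adj r)^T by rewrite /row_full eqn_leq rank_leq_col -subn_eq0 full.
rewrite row_full_unit unitmx_tr => unitN.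
exists (pat_at (invmx (closed_adj r) *m col_pat c)) => v.
rewrite -[v]enum_rankK -closed_adj_mulE mulmxA mulmxV // mul1mx.
by rewrite /col_pat mxE.
Qed.

Lemma half_activatedP v : half_activated r v <-> half_in r setT v.
Proof.
rewrite /half_activated; split => [| [f Nf fv]].
  case/existsP => p /andP[/eqP Np /eqP pv]; exists (pat_at p) => // w _.
  by move: w; apply/(closed_adj_mul_const _ 0).
apply/existsP; exists (col_pat f); rewrite pat_at_col fv eqxx andbT.
apply/eqP/(closed_adj_mul_const _ 0) => w.
by under eq_nbsum do rewrite pat_at_col; exact: Nf.
Qed.

Definition forced (v : W) : bool :=
  [forall p : 'cV['F_2]_#|W|, (closed_adj r *m p == const_mx 1) ==> (pat_at p v == 1)].

Lemma forcedP v : forced v <-> forced_in r setT v.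
Proof.
rewrite /forced; split => [/forallP forc f Of | forc].
  have /implyP := forc (col_pat f); rewrite pat_at_col => /(_ _)/eqP; apply; apply/eqP.
  by apply/closed_adj_mul_const => w; under eq_nbsum do rewrite pat_at_col; exact: Of.
apply/forallP => p; apply/implyP => /eqP/closed_adj_mul_const Np.
by apply/eqP/forc => w _.
Qed.

End ClosedAdjacency.

Section InducedSubgraph.
Variables (V : finType) (e : rel V) (S : {set V}).

Definition ext_sub (g : {x : V | x \in S} -> 'F_2) (v : V) : 'F_2 :=
  if insub v is Some x then g x else 0.

Lemma ext_sub_val g x : ext_sub g (val x) = g x.
Proof. by rewrite /ext_sub valK. Qed.

Lemma nbsum_induced f (x : {x : V | x \in S}) :
  nbsum (induced e S) setT (fun y => f (val y)) x = nbsum e S f (val x).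
Proof. by rewrite /nbsum [RHS]big_sub; apply: eq_bigl => y; rewrite in_setT. Qed.

Lemma nbsum_induced_ext g v (vS : v \in S) :
  nbsum (induced e S) setT g (Sub v vS) = nbsum e S (ext_sub g) v.
Proof.
have /= <- := nbsum_induced (ext_sub g) (Sub v vS).
by apply: eq_nbsum => y _; rewrite ext_sub_val.
Qed.

Lemma ind_always_solvableP : ind_always_solvable e S <-> solvable_in e S.
Proof.
rewrite /ind_always_solvable always_solvableP; split => [solv f Nf v vS | solv g Ng x _].
  apply: (solv (fun y => f (val y)) _ (Sub v vS) (in_setT _)) => y _.
  by rewrite nbsum_induced Nf ?(valP y).
rewrite -ext_sub_val; apply: solv (valP x) => v vS.
by rewrite -(nbsum_induced_ext g vS) Ng ?in_setT.
Qed.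

Lemma solvable_in_surj : solvable_in e S ->
  forall c : V -> 'F_2, exists f, forall v, v \in S -> nbsum e S f v = c v.
Proof.
move/ind_always_solvableP/always_solvable_surj => surj c.
have [g Ng] := surj (fun y => c (val y)).
by exists (ext_sub g) => v vS; rewrite -(nbsum_induced_ext g vS) Ng.
Qed.

Lemma half_in_induced v (vS : v \in S) :
  half_in (induced e S) setT (Sub v vS) <-> half_in e S v.
Proof.
split => [[g Ng gv] | [f Nf fv]].
  exists (ext_sub g); last by rewrite /ext_sub insubT.
  by move=> w wS; rewrite -(nbsum_induced_ext g wS) Ng ?in_setT.
by exists (fun y => f (val y)) => // y _; rewrite nbsum_induced Nf ?(valP y).
Qed.

Lemma forced_in_induced v (vS : v \in S) :
  forced_in (induced e S) setT (Sub v vS) <-> forced_in e S v.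
Proof.
split => [forc f Of | forc g Og].
  by apply: (forc (fun y => f (val y))) => y _; rewrite nbsum_induced Of ?(valP y).
rewrite -ext_sub_val; apply: forc => w wS.
by rewrite -(nbsum_induced_ext g wS) Og ?in_setT.
Qed.

Lemma ind_activationE v (vS : v \in S) : ind_activation e S v =
  if half_activated (induced e S) (Sub v vS) then -1
  else if forced (induced e S) (Sub v vS) then 1 else 0.
Proof.
rewrite /ind_activation insubT /activation /always_activated /never_activated.
case: half_activated => //=; rewrite -/(forced _ _).
by case: (forced _ _) => //; case: [forall _, _].
Qed.

Lemma ind_activationN1P v : v \in S -> ind_activation e S v = -1 <-> half_in e S v.
Proof.
move=> vS; rewrite (ind_activationE vS) -(half_in_induced vS) -half_activatedP.
by case: half_activated; split => //; case: ifP.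
Qed.

Section SolvableActivation.
Hypotheses (e_sym : symmetric e) (e_irr : irreflexive e) (solvS : solvable_in e S).

Lemma ind_activation_solvable v q : v \in S -> point_sol e S v 1 q ->
  ind_activation e S v = if q v == 1 then 1 else 0.
Proof.
move=> vS Pq; rewrite (ind_activationE vS).
have -> : half_activated (induced e S) (Sub v vS) = false.
  apply/negbTE/negP => /half_activatedP/(half_in_induced vS)[f Nf fv].
  by move: fv; rewrite (solvS Nf vS) => /esym/F2_oner_neq0.
have [p Op] := solvable_in_surj solvS (fun _ => 1).
have pq : p v = q v := point_sol_ones e_sym e_irr vS Pq Op.
case: (boolP (forced _ _)) => [/forcedP/(forced_in_induced vS) forc | /negP unforc].
  by rewrite -pq forc.
case: eqP => // qv; case: unforc; apply/forcedP/(forced_in_induced vS) => p' Op'.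
by rewrite (point_sol_ones e_sym e_irr vS Pq Op').
Qed.

Lemma ind_activation1P v q : v \in S -> point_sol e S v 1 q ->
  ind_activation e S v = 1 <-> q v = 1.
Proof. by move=> vS Pq; rewrite (ind_activation_solvable vS Pq); case: eqP. Qed.

Lemma ind_activation0P v q : v \in S -> point_sol e S v 1 q ->
  ind_activation e S v = 0 <-> q v = 0.
Proof.
move=> vS Pq; rewrite (ind_activation_solvable vS Pq).
by case: eqP => [->|]; [split => // /esym/F2_oner_neq0 | case: (F2_cases (q v))].
Qed.

End SolvableActivation.
End InducedSubgraph.

Section Gluing.
Variables (V : finType) (e : rel V).
Hypothesis e_sym : symmetric e.
Implicit Types (A B C : {set V}) (f : V -> 'F_2).

Lemma disjoint_notin A B x : A :&: B = set0 -> x \in A -> x \notin B.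
Proof. by move=> AB0 xA; apply/negP => xB; have := in_set0 x; rewrite -AB0 in_setI xA xB. Qed.

Lemma disjoint_neq A B v w : A :&: B = set0 -> v \in A -> w \in B -> (v == w) = false.
Proof.
by move=> AB0 vA wB; apply/negbTE; apply: contraTneq wB => <-; apply: disjoint_notin vA.
Qed.

Lemma only_edge_sym A B a b : only_edge e A B a b -> only_edge e B A b a.
Proof. by move=> OAB x y xB yA; rewrite e_sym OAB // andbC. Qed.

Lemma only_edge_setUr A B C a b : B :&: C = set0 -> b \in B ->
  only_edge e A B a b -> no_edge e A C -> only_edge e A (B :|: C) a b.
Proof.
move=> BC0 bB OAB NAC x y xA /setUP[yB | yC]; first exact: OAB.
by rewrite NAC // [y == b]eq_sym (disjoint_neq BC0 bB yC) andbF.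
Qed.

Lemma only_edge_setUl A B C b c : A :&: B = set0 -> b \in B ->
  no_edge e A C -> only_edge e B C b c -> only_edge e (A :|: B) C b c.
Proof.
move=> AB0 bB NAC OBC x y /setUP[xA | xB] yC; last exact: OBC.
by rewrite NAC // (disjoint_neq AB0 xA bB).
Qed.

Lemma nbsum_only_edge A B a b f v : A :&: B = set0 -> only_edge e B A b a ->
  a \in A -> v \in B -> nbsum e A f v = if v == b then f a else 0.
Proof.
move=> AB0 OBA aA vB; rewrite /nbsum.
under eq_bigr => w wA do rewrite eq_sym (disjoint_neq AB0 wA vB) OBA //=.
case: eqP => _ /=; last by rewrite big1.
by rewrite (bigD1 a) //= eqxx big1 ?addr0 // => w /andP[_ /negbTE ->].
Qed.

Lemma null_in_glue A B a b f : A :&: B = set0 -> only_edge e A B a b -> b \in B ->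
  null_in e (A :|: B) f -> point_sol e A a (f b) f.
Proof.
move=> AB0 OAB bB Nf v vA; apply: F2_add_eq0.
rewrite -(nbsum_only_edge f _ OAB bB vA); last by rewrite setIC.
by rewrite -nbsum_setU // Nf // inE vA.
Qed.

Lemma null_in_glue_r A B a b f : A :&: B = set0 -> only_edge e A B a b -> a \in A ->
  null_in e (A :|: B) f -> point_sol e B b (f a) f.
Proof.
move=> AB0 OAB aA; rewrite setUC; apply: null_in_glue (only_edge_sym OAB) aA.
by rewrite setIC.
Qed.

Lemma null_in_glue_eq0 A B a b j : solvable_in e A -> solvable_in e B ->
  A :&: B = set0 -> only_edge e A B a b -> a \in A -> b \in B ->
  null_in e (A :|: B) j -> j b = 0 -> forall v, v \in A :|: B -> j v = 0.
Proof.
move=> sA sB AB0 OAB aA bB Nj jb.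
have jA : forall v, v \in A -> j v = 0.
  by apply: sA; have := null_in_glue AB0 OAB bB Nj; rewrite jb => /point_sol0.
have jB : forall v, v \in B -> j v = 0.
  by apply: sB; have := null_in_glue_r AB0 OAB aA Nj; rewrite jA // => /point_sol0.
by move=> v /setUP[/jA | /jB].
Qed.

(* Gluing two solvable parts along an edge leaves a null space of dimension <= 1. *)
Lemma null_in_glue_unique A B a b j k x : solvable_in e A -> solvable_in e B ->
  A :&: B = set0 -> only_edge e A B a b -> a \in A -> b \in B -> x \in A :|: B ->
  null_in e (A :|: B) j -> null_in e (A :|: B) k -> k x = 1 -> j x = 0 ->
  forall v, v \in A :|: B -> j v = 0.
Proof.
move=> sA sB AB0 OAB aA bB xAB Nj Nk kx jx.
have glue0 := null_in_glue_eq0 sA sB AB0 OAB aA bB.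
case: (F2_cases (j b)) => jb; first exact: glue0.
have kb : k b = 1.
  case: (F2_cases (k b)) => // kb.
  by move: kx; rewrite (glue0 _ Nk kb x xAB) => /esym/F2_oner_neq0.
have jkb : j b + k b = 0 by rewrite jb kb F2_addxx.
have := glue0 _ (null_inD Nj Nk) jkb x xAB.
by rewrite jx kx add0r => /F2_oner_neq0.
Qed.

End Gluing.

Section Sufficiency.
Variables (V : finType) (e : rel V).
Hypotheses (e_sym : symmetric e) (e_irr : irreflexive e).

Lemma split_two_solvable : split_two e -> always_solvable e.
Proof.
case=> [V1 [V2 [u [w [V12 V12T uV1 wV2 [_ _ /ind_always_solvableP s1
  /ind_always_solvableP s2 [a1 _ O12]]]]]]].
apply/always_solvableP; rewrite /solvable_in -V12T => f Nf.
have P1 := null_in_glue V12 O12 wV2 Nf.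
have P2 := null_in_glue_r e_sym V12 O12 uV1 Nf.
have fu : f u = 0.
  case: (F2_cases (f w)) => fw; rewrite fw in P1; first exact: s1 _ (point_sol0 P1) u uV1.
  exact/(ind_activation0P e_sym e_irr s1 uV1 P1).
rewrite fu in P2; have f2 := s2 _ (point_sol0 P2).
rewrite f2 // in P1; have f1 := s1 _ (point_sol0 P1).
by move=> v /setUP[/f1 | /f2].
Qed.

Lemma split_path3_solvable : split_path3 e -> always_solvable e.
Proof.
case=> [V1 [V2 [V3 [x [y [z [[V12 V13 V23 V123T] [_ _ _ [s1 s2 s3]] [xV1 yV2 zV3]
  [a1 _ a3] [O12 O23 N13]]]]]]]].
move: s1 s2 s3 => /ind_always_solvableP s1 /ind_always_solvableP s2 /ind_always_solvableP s3.
apply/always_solvableP; rewrite /solvable_in -V123T => f Nf.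
have V1_23 : V1 :&: (V2 :|: V3) = set0 by rewrite setIUr V12 V13 setU0.
have V12_3 : (V1 :|: V2) :&: V3 = set0 by rewrite setIUl V13 V23 setU0.
have P1 : point_sol e V1 x (f y) f.
  apply: (null_in_glue V1_23 (only_edge_setUr V23 yV2 O12 N13)); first by rewrite inE yV2.
  by rewrite setUA.
have P3 : point_sol e V3 z (f y) f.
  apply: (null_in_glue_r e_sym V12_3 (only_edge_setUl V12 yV2 N13 O23)) => //.
  by rewrite inE yV2 orbT.
have P2 : point_sol e V2 y (f x + f z) f.
  move=> v vV2; apply/esym/F2_add_eq0; have := Nf v; rewrite !inE vV2 orbT => /(_ isT).
  rewrite !nbsum_setU ?setIUl ?V12 ?V13 ?V23 ?setU0 //.
  rewrite (nbsum_only_edge _ _ (only_edge_sym e_sym O12)) //.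
  rewrite (nbsum_only_edge _ _ O23) //; last by rewrite setIC.
  by case: eqP => _; rewrite addrAC ?addr0.
have fy : f y = 0.
  case: (F2_cases (f y)) => // fy1; rewrite fy1 in P1 P3.
  have fx := (ind_activation1P e_sym e_irr s1 xV1 P1).1 a1.
  have fz := (ind_activation1P e_sym e_irr s3 zV3 P3).1 a3.
  rewrite fx fz F2_addxx in P2.
  by move: fy1; rewrite (s2 _ (point_sol0 P2) y yV2) => /esym/F2_oner_neq0.
rewrite fy in P1 P3.
have f1 := s1 _ (point_sol0 P1); have f3 := s3 _ (point_sol0 P3).
rewrite f1 // f3 // addr0 in P2; have f2 := s2 _ (point_sol0 P2).
by move=> v /setUP[/setUP[/f1 | /f2] | /f3].
Qed.

Lemma split_X_solvable : split_X e -> always_solvable e.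
Proof.
case=> [V1 [V2 [V3 [a [b [y [x [[V12 V13 V23 V123T] [_ _ _ [s1 s2 s3]]
  [aV1 bV2 yV3 xX] [_ _ a3 aX] [O12 O3X]]]]]]]]].
move: s1 s2 s3 => /ind_always_solvableP s1 /ind_always_solvableP s2 /ind_always_solvableP s3.
have [k Nk kx] := (ind_activationN1P e xX).1 aX.
set X := V1 :|: V2 in xX k Nk kx O3X.
have V3X : V3 :&: X = set0 by rewrite setIUr setIC V13 setIC V23 setU0.
apply/always_solvableP; rewrite /solvable_in -V123T setUC => f Nf.
have P3 := null_in_glue V3X O3X xX Nf.
have PX := null_in_glue_r e_sym V3X O3X yV3 Nf.
have fy : f y = 0.
  case: (F2_cases (f y)) => // fy1; rewrite fy1 in PX.
  by move: kx; rewrite (point_sol_null e_sym xX PX Nk) => /esym/F2_oner_neq0.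
have fx : f x = 0.
  case: (F2_cases (f x)) => // fx1; rewrite fx1 in P3.
  by move: fy; rewrite ((ind_activation1P e_sym e_irr s3 yV3 P3).1 a3) => /F2_oner_neq0.
rewrite fx in P3; rewrite fy in PX.
have f3 := s3 _ (point_sol0 P3).
have fX := null_in_glue_unique e_sym s1 s2 V12 O12 aV1 bV2 xX (point_sol0 PX) Nk kx fx.
by move=> v /setUP[/f3 | /fX].
Qed.

End Sufficiency.

Definition rem_edge (V : finType) (g : rel V) (a b : V) : rel V :=
  fun y z => g y z && ~~ ((y == a) && (z == b) || (y == b) && (z == a)).

Definition component (V : finType) (g : rel V) (r : V) : {set V} := [set x | connect g r x].

Definition attached_at (V : finType) (e : rel V) (C : {set V}) (u : V) : Prop :=
  forall v w, v \notin C -> w \in C -> e v w -> w = u.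

Section Components.
Variables (V : finType) (g : rel V).

Lemma rem_edge_sym a b : symmetric g -> symmetric (rem_edge g a b).
Proof.
move=> g_sym y z; rewrite /rem_edge g_sym; congr (_ && ~~ _).
by rewrite (andbC (z == a)) (andbC (z == b)) orbC.
Qed.

Lemma rem_edge_sub a b : subrel (rem_edge g a b) g.
Proof. by move=> y z /andP[]. Qed.

Lemma rem_edge_removed a b w v : g w v -> ~~ rem_edge g a b w v -> (w == a) || (w == b).
Proof. by rewrite /rem_edge => -> /=; rewrite negbK => /orP[] /andP[-> _]; rewrite ?orbT. Qed.

Lemma connect_rem_edge a b x : connect g a x ->
  connect (rem_edge g a b) a x \/ connect (rem_edge g a b) b x.
Proof.
set g' := rem_edge g a b; pose P s := connect g' a s \/ connect g' b s.
suff PS : forall s q, P s -> path g s q -> P (last s q).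
  by case/connectP => p gp ->; apply: PS gp; left.
move=> s q; elim: q s => [//|y q IHq] s Ps /= /andP[gsy]; apply: IHq.
case: (boolP (g' s y)) => [g'sy | ].
  by case: Ps => Ps; [left | right]; apply: connect_trans Ps (connect1 g'sy).
rewrite /g' /rem_edge gsy /= negbK => /orP[] /andP[_ /eqP ->]; [right | left]; exact: connect0.
Qed.

Lemma connect_isolated l x : (forall z, ~~ g l z) -> connect g l x -> x = l.
Proof.
by move=> l_iso /connectP[[|z p] /= gp ->] //; move: gp; rewrite (negbTE (l_iso z)).
Qed.

Lemma component_boundary r w v : symmetric g ->
  w \in component g r -> v \notin component g r -> ~~ g w v.
Proof.
move=> g_sym; rewrite !inE => rw; apply: contra => gwv.
exact: connect_trans rw (connect1 gwv).
Qed.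

End Components.

Lemma acyclic_induced (V : finType) (e : rel V) (S : {set V}) :
  acyclic_graph e -> acyclic_graph (induced e S).
Proof.
move=> e_acyc c size_c uc; have := e_acyc (map val c).
by rewrite size_map (map_inj_uniq val_inj) cycle_map; apply.
Qed.

Section Trees.
Variables (V : finType) (e : rel V).
Hypotheses (e_sym : symmetric e) (e_irr : irreflexive e) (e_acyc : acyclic_graph e).

Lemma ind_tree_set1 l : ind_tree e [set l].
Proof.
split; first by apply/card_gt0P; exists (Sub l (set11 l)).
split; last exact: acyclic_induced.
move=> x y; suff -> : x = y by apply: connect0.
by apply: val_inj; rewrite (set1P (valP x)) (set1P (valP y)).
Qed.

Lemma ind_tree_component (g : rel V) r : symmetric g -> subrel g e ->
  ind_tree e (component g r).
Proof.
move=> g_sym ge; set C := component g r.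
have rC : r \in C by rewrite inE connect0.
split; first by apply/card_gt0P; exists (Sub r rC).
split; last exact: acyclic_induced.
move=> x y; have lift p (z : {x | x \in C}) :
    path g (val x) p -> last (val x) p = val z -> connect (induced e C) x z.
  elim/last_ind: p z => [z _ /val_inj -> //| p w IHp z].
  rewrite rcons_path last_rcons => /andP[gp gw] wz.
  have pC : last (val x) p \in C.
    have rx : connect g r (val x) by have := valP x; rewrite inE.
    by rewrite inE (connect_trans rx) // (path_connect gp) // mem_last.
  apply: connect_trans (IHp (Sub (last (val x) p) pC) gp erefl) (connect1 _).
  by rewrite /induced /= -wz ge.
have : connect g (val x) (val y).
  have := valP x; have := valP y; rewrite !inE => ry rx.
  by rewrite (sym_connect_sym g_sym) in rx; apply: connect_trans rx ry.
by case/connectP => p gp yp; apply: lift gp (esym yp).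
Qed.

Lemma rem_edge_disconnects (g : rel V) a b : subrel g e -> g a b ->
  ~~ connect (rem_edge g a b) a b.
Proof.
move=> ge gab; have ab : a != b by apply: contraTneq (ge _ _ gab) => ->; rewrite e_irr.
apply/negP => /connectP[p gp pb]; case/shortenP: gp pb => p' gp' up' _ pb.
case: p' gp' up' pb => [|z [|z' p']].
- by move=> _ _ /= ba; rewrite ba eqxx in ab.
- by move=> /= /andP[gaz _] _ bz; move: gaz; rewrite -bz /rem_edge !eqxx andbF.
move=> gp up pb; have /negP := @e_acyc [:: a, z, z' & p'] isT up; apply.
rewrite /cycle rcons_path (sub_path _ gp) => [|y w /rem_edge_sub/ge //].
by rewrite -pb e_sym ge.
Qed.

Lemma component_rem_edge (g : rel V) a b : symmetric g -> subrel g e -> g a b ->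
  component (rem_edge g a b) a :&: component (rem_edge g a b) b = set0 /\
  component (rem_edge g a b) a :|: component (rem_edge g a b) b = component g a.
Proof.
move=> g_sym ge gab; set g' := rem_edge g a b.
have g'_sub : subrel (connect g') (connect g).
  by apply: connect_sub => y z /rem_edge_sub/connect1.
split; apply/setP => x; rewrite !inE.
  apply/negbTE/negP => /andP[ax bx]; have /negP := rem_edge_disconnects ge gab; apply.
  by rewrite (connect_trans ax) // (sym_connect_sym (rem_edge_sym a b g_sym)).
apply/orP/idP => [[/g'_sub // | /g'_sub bx] | /(connect_rem_edge b) //].
exact: connect_trans (connect1 gab) bx.
Qed.

Lemma path_chord_free x h p z : path e x (h :: p) -> uniq (x :: h :: p) ->
  z \in p -> ~~ e x z.
Proof.
move=> + + zp; case/splitPr: zp => p1 p2 xp up; apply/negP => xz.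
have ucyc : uniq (x :: rcons (h :: p1) z).
  by move: up; rewrite -cat_rcons -!cat_cons cat_uniq => /andP[].
have size_cyc : (3 <= size (x :: rcons (h :: p1) z))%N by rewrite /= size_rcons.
have /negP := @e_acyc _ size_cyc ucyc; apply.
rewrite /cycle rcons_path last_rcons e_sym xz andbT rcons_path.
by move: xp; rewrite -cat_cons cat_path => /andP[-> /= /andP[]].
Qed.

Lemma leaf_exists a b : e a b -> exists l u, e l u /\ forall z, e l z -> z = u.
Proof.
move=> eab; suff ext n x h p : (#|V| - size p < n)%N -> path e x (h :: p) ->
    uniq (x :: h :: p) -> exists l u, e l u /\ forall z, e l z -> z = u.
  apply: (ext #|V|.+1 a b [::]); rewrite /= ?eab ?inE ?andbT ?subn0 //.
  by apply: contraTneq eab => ->; rewrite e_irr.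
elim: n x h p => [//|n IHn] x h p lt_n xp ux.
case: (pickP [pred z | e x z && (z != h)]) => [z /andP[xz zh] | none]; last first.
  exists x, h; split; first by case/andP: xp.
  by move=> z xz; apply/eqP; have := none z; rewrite /= xz => /negbFE.
have zx : z != x by apply: contraTneq xz => ->; rewrite e_irr.
have zp : z \notin p by apply: contraL xz => /(path_chord_free xp ux) ->.
apply: (IHn z x (h :: p)).
- have : (size (x :: h :: p) <= #|V|)%N by rewrite -(card_uniqP ux) max_card.
  by move: lt_n => /=; lia.
- by apply/andP; split; first rewrite e_sym.
- by apply/andP; split; rewrite // !inE (negbTE zx) (negbTE zh).
Qed.

End Trees.

Lemma edge_exists (V : finType) (e : rel V) : connected_graph e -> (2 <= #|V|)%N ->
  exists a b, e a b.
Proof.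
move=> e_conn card_V; have [a _] := card_gt0P (ltnW card_V).
have [b] : exists b, b \in predC1 a by apply/card_gt0P; rewrite cardC1 -subn1 subn_gt0.
rewrite inE => ba; case/connectP: (e_conn a b) => [[|z p] /= ab_path ba'].
  by rewrite ba' eqxx in ba.
by exists a, z; case/andP: ab_path.
Qed.

Section Attachments.
Variables (V : finType) (e : rel V).
Hypotheses (e_sym : symmetric e) (e_irr : irreflexive e).
Implicit Types (A B C : {set V}) (f : V -> 'F_2).

Lemma attached_set1 l : attached_at e [set l] l.
Proof. by move=> v w _ /set1P. Qed.

Lemma attached_component (g : rel V) r u : symmetric g ->
  (forall w v, w \in component g r -> e w v -> ~~ g w v -> w = u) ->
  attached_at e (component g r) u.
Proof.
move=> g_sym bnd v w vC wC evw.
by apply: bnd wC _ (component_boundary g_sym wC vC); rewrite e_sym.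
Qed.

(* A null pattern of [C] vanishing at the attachment vertex extends by zero to
   a null pattern of the whole graph. *)
Lemma null_in_attached C u j : solvable_in e setT -> attached_at e C u ->
  null_in e C j -> j u = 0 -> forall v, v \in C -> j v = 0.
Proof.
move=> solvT attC Nj ju v vC; pose J w := if w \in C then j w else 0.
suff : J v = 0 by rewrite /J vC.
apply: solvT (in_setT v) => x _; rewrite -(setUCr C) nbsum_setU ?setICr //.
have -> : nbsum e (~: C) J x = 0.
  by rewrite /nbsum big1 // => w; rewrite inE /J => /negbTE ->; case: ifP.
rewrite addr0 (@eq_nbsum _ e _ _ j) => [|w wC]; last by rewrite /J wC.
case: (boolP (x \in C)) => [/Nj // | xC]; rewrite /nbsum big1 // => w wC.
have -> : (x == w) = false by apply: contraNF xC => /eqP ->.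
by case: ifP => //= /(attC _ _ xC wC) ->.
Qed.

Lemma solvable_in_attached C u q : solvable_in e setT -> attached_at e C u ->
  u \in C -> point_sol e C u 1 q -> solvable_in e C.
Proof.
move=> solvT attC uC Pq j Nj.
exact: (null_in_attached solvT attC Nj (point_sol_null e_sym uC Pq Nj)).
Qed.

Lemma only_edge_attached A B a b : A :&: B = set0 ->
  attached_at e A a -> attached_at e B b -> e a b -> only_edge e A B a b.
Proof.
move=> AB0 attA attB eab x y xA yB; apply/idP/andP => [exy | [/eqP -> /eqP -> //]].
have xa : x = a by apply: attA (disjoint_notin _ yB) xA _; rewrite 1?setIC // e_sym.
by rewrite xa (attB _ _ (disjoint_notin AB0 xA) yB exy) !eqxx.
Qed.

Lemma null_in_neighbour (S : {set V}) f v : v \in S -> f v = 1 -> nbsum e S f v = 0 ->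
  exists w, [/\ w \in S, e v w & f w = 1].
Proof.
move=> vS fv Nv; apply: NNPP => none; move: Nv.
rewrite /nbsum (bigD1 v) //= eqxx fv big1 ?addr0 => [|w /andP[wS wv]].
  exact: F2_oner_neq0.
rewrite eq_sym (negbTE wv) /=; case: ifP => // evw.
by case: (F2_cases (f w)) => // fw; case: none; exists w.
Qed.

Lemma glue_null_in A B a b f : A :&: B = set0 -> only_edge e A B a b ->
  a \in A -> b \in B -> point_sol e A a (f b) f -> point_sol e B b (f a) f ->
  null_in e (A :|: B) f.
Proof.
move=> AB0 OAB aA bB PA PB v; rewrite nbsum_setU // => /setUP[vA | vB].
  by rewrite PA // (nbsum_only_edge _ _ OAB) ?F2_addxx // setIC.
by rewrite PB // (nbsum_only_edge _ _ (only_edge_sym e_sym OAB)) ?F2_addxx.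
Qed.

Lemma ind_activation_set1 l : ind_activation e [set l] l = 1.
Proof.
have P1 : point_sol e [set l] l 1 (fun=> 1) by move=> w /set1P ->; rewrite nbsum_set1 !eqxx.
exact/(ind_activation1P e_sym e_irr (@solvable_in_set1 _ e l) (set11 l) P1).
Qed.

End Attachments.

Section Pendant.
Variables (V : finType) (e : rel V).
Hypotheses (e_sym : symmetric e) (e_irr : irreflexive e) (e_acyc : acyclic_graph e).
Hypotheses (e_conn : connected_graph e) (solvT : solvable_in e setT).
Variables (l u : V).
Hypotheses (lu : e l u) (l_leaf : forall z, e l z -> z = u).

Lemma neighbour_neq_leaf : u != l.
Proof. by apply: contraTneq lu => ->; rewrite e_irr. Qed.

Lemma attached_pendant : attached_at e [set~ l] u.
Proof. by move=> v w; rewrite !in_setC1 negbK => /eqP -> _ /l_leaf. Qed.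

Lemma only_edge_pendant : only_edge e [set~ l] [set l] u l.
Proof.
have disj : [set~ l] :&: [set l] = set0 by rewrite setIC setICr.
apply: (only_edge_attached e_sym disj attached_pendant (@attached_set1 _ e l)).
by rewrite e_sym.
Qed.

Lemma component_pendant : component (rem_edge e u l) u = [set~ l].
Proof.
have eul : e u l by rewrite e_sym.
have [disj cover] := component_rem_edge e_sym e_irr e_acyc e_sym (fun _ _ => id) eul.
have Cl : component (rem_edge e u l) l = [set l].
  apply/setP => x; rewrite !inE; apply/idP/eqP => [|->]; last exact: connect0.
  apply: connect_isolated => z; apply/negP => /andP[/l_leaf ->].
  by rewrite !eqxx orbT.
apply/setP => x; rewrite in_setC1; apply/idP/idP => [xCu | xl].
  apply: contraTneq xCu => ->; apply/negP => lCu.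
  by have := in_set0 l; rewrite -disj in_setI lCu Cl set11.
have : x \in component e u by rewrite inE e_conn.
by rewrite -cover in_setU Cl in_set1 (negbTE xl) orbF.
Qed.

Lemma ind_tree_pendant : ind_tree e [set~ l].
Proof.
rewrite -component_pendant; apply: ind_tree_component => //.
  exact: rem_edge_sym.
exact: rem_edge_sub.
Qed.

Lemma pendant_point_sol0 q : point_sol e [set~ l] u 1 q -> q u = 0.
Proof.
move=> Pq; case: (F2_cases (q u)) => // qu; exfalso.
pose K v := if v == l then 1 else q v.
have uT : u \in [set~ l] by rewrite in_setC1 neighbour_neq_leaf.
have disj : [set~ l] :&: [set l] = set0 by rewrite setIC setICr.
have NK : null_in e ([set~ l] :|: [set l]) K.
  apply: (glue_null_in e_sym disj only_edge_pendant uT (set11 l)).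
    move=> w wT; rewrite /K eqxx -Pq //; apply: eq_nbsum => v.
    by rewrite in_setC1 => /negbTE ->.
  by move=> w /set1P ->; rewrite nbsum_set1 /K !eqxx (negbTE neighbour_neq_leaf) qu.
move: NK; rewrite setUC setUCr => /solvT/(_ l (in_setT l)).
by rewrite /K eqxx; apply: F2_oner_neq0.
Qed.

Lemma solvable_pendant_split_two : solvable_in e [set~ l] -> split_two e.
Proof.
move=> solv; have [q Pq] := solvable_in_surj solv (fun w => if w == u then 1 else 0).
have uT : u \in [set~ l] by rewrite in_setC1 neighbour_neq_leaf.
have disj : [set~ l] :&: [set l] = set0 by rewrite setIC setICr.
have cover : [set~ l] :|: [set l] = setT by rewrite setUC setUCr.
exists [set~ l], [set l], u, l; split; rewrite ?set11 //.
split; [exact: ind_tree_pendant | exact: ind_tree_set1 | exact/ind_always_solvableP |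
  exact/ind_always_solvableP/solvable_in_set1 | ].
split; [ | exact: ind_activation_set1 | exact: only_edge_pendant].
exact/(ind_activation0P e_sym e_irr solv uT Pq)/pendant_point_sol0.
Qed.

Lemma pendant_branches c : e u c -> c != l ->
  exists C2 C3 : {set V}, [/\ C2 :&: C3 = set0, C2 :|: C3 = [set~ l], u \in C2, c \in C3 &
    [/\ ind_tree e C2, ind_tree e C3, attached_at e C2 u & attached_at e C3 c]].
Proof.
move=> uc cl; set g1 := rem_edge e u l; set g2 := rem_edge g1 u c.
have g1_sym : symmetric g1 := rem_edge_sym u l e_sym.
have g2_sym : symmetric g2 := rem_edge_sym u c g1_sym.
have g1_sub : subrel g1 e := @rem_edge_sub _ e u l.
have g2_sub : subrel g2 e := fun y z g2yz => g1_sub _ _ (rem_edge_sub g2yz).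
have g1uc : g1 u c by rewrite /g1 /rem_edge uc eqxx (negbTE cl) (negbTE neighbour_neq_leaf).
have [disj cover] := component_rem_edge e_sym e_irr e_acyc g1_sym g1_sub g1uc.
rewrite component_pendant in cover.
have removed w v : e w v -> ~~ g2 w v -> [|| w == u, w == c | w == l].
  move=> ewv; case: (boolP (g1 w v)) => [g1wv /(rem_edge_removed g1wv) | /(rem_edge_removed ewv)];
    by case/orP => ->; rewrite ?orbT.
set C2 := component g2 u; set C3 := component g2 c.
have uC2 : u \in C2 by rewrite inE connect0.
have cC3 : c \in C3 by rewrite inE connect0.
have lC2 : l \notin C2 by apply: contraL (set11 l) => lC2; rewrite -in_setC -cover in_setU lC2.
have lC3 : l \notin C3.
  by apply: contraL (set11 l) => lC3; rewrite -in_setC -cover in_setU lC3 orbT.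
exists C2, C3; split => //; split; try exact: ind_tree_component.
  apply: (attached_component e_sym g2_sym) => w v wC2 ewv.
  move=> /(removed _ _ ewv) /or3P[/eqP // | /eqP wc | /eqP wl].
    by move: wC2; rewrite wc (negbTE (disjoint_notin (etrans (setIC _ _) disj) cC3)).
  by move: wC2; rewrite wl (negbTE lC2).
apply: (attached_component e_sym g2_sym) => w v wC3 ewv.
move=> /(removed _ _ ewv) /or3P[/eqP wu | /eqP // | /eqP wl].
  by move: wC3; rewrite wu (negbTE (disjoint_notin disj uC2)).
by move: wC3; rewrite wl (negbTE lC3).
Qed.

Section Branches.
Variables (c : V) (C2 C3 : {set V}) (k : V -> 'F_2).
Hypotheses (disj23 : C2 :&: C3 = set0) (cover23 : C2 :|: C3 = [set~ l]).
Hypotheses (uC2 : u \in C2) (cC3 : c \in C3) (t2 : ind_tree e C2) (t3 : ind_tree e C3).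
Hypotheses (att2 : attached_at e C2 u) (att3 : attached_at e C3 c) (uc : e u c).
Hypotheses (Nk : null_in e [set~ l] k) (ku : k u = 1) (kc : k c = 1).

Lemma only_edge_branches : only_edge e C2 C3 u c.
Proof. exact: (only_edge_attached e_sym disj23 att2 att3 uc). Qed.

Lemma leaf_disjoint_branches : [set l] :&: C2 = set0 /\ [set l] :&: C3 = set0.
Proof.
have : l \notin C2 :|: C3 by rewrite cover23 !inE eqxx.
rewrite in_setU negb_or => /andP[lC2 lC3].
by split; apply/eqP; rewrite setI_eq0 disjoints1.
Qed.

Lemma branch_solvable_activation : [/\ solvable_in e C2, solvable_in e C3,
  ind_activation e C2 u = 1 & ind_activation e C3 c = 1].
Proof.
have Nk23 : null_in e (C2 :|: C3) k by rewrite cover23.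
have P2 := null_in_glue disj23 only_edge_branches cC3 Nk23; rewrite kc in P2.
have P3 := null_in_glue_r e_sym disj23 only_edge_branches uC2 Nk23; rewrite ku in P3.
have s2 := solvable_in_attached e_sym solvT att2 uC2 P2.
have s3 := solvable_in_attached e_sym solvT att3 cC3 P3.
split => //; [exact/(ind_activation1P e_sym e_irr s2 uC2 P2) |
  exact/(ind_activation1P e_sym e_irr s3 cC3 P3)].
Qed.

Lemma branches_split_path3 : split_path3 e.
Proof.
have [s2 s3 a2 a3] := branch_solvable_activation.
have [l2 l3] := leaf_disjoint_branches.
exists [set l], C2, C3, l, u, c; split.
- by split => //; rewrite -setUA cover23 setUCr.
- by split; [exact: ind_tree_set1 | by [] | by [] |
    split; apply/ind_always_solvableP => //; exact: solvable_in_set1].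
- by split; rewrite ?set11.
- by split; [exact: ind_activation_set1 | by [] | by []].
split; [ | exact: only_edge_branches | ].
  by apply: (only_edge_attached e_sym l2 (@attached_set1 _ e l) att2).
move=> x y /set1P -> yC3; apply/negbTE/negP => /l_leaf yu.
by move: yC3; rewrite yu (negbTE (disjoint_notin disj23 uC2)).
Qed.

Lemma branches_split_X : split_X e.
Proof.
have [s2 s3 a2 a3] := branch_solvable_activation.
have [l2 l3] := leaf_disjoint_branches.
have uC23 : u \in C2 :|: C3 by rewrite in_setU uC2.
exists C2, C3, [set l], u, c, l, u; split.
- by split; rewrite // 1?setIC // cover23 setUC setUCr.
- by split; [by [] | by [] | exact: ind_tree_set1 |
    split; apply/ind_always_solvableP => //; exact: solvable_in_set1].
- by split; rewrite ?set11.
- split; [by [] | by [] | exact: ind_activation_set1 |].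
  by apply/(ind_activationN1P e uC23); exists k; rewrite // cover23.
split; first exact: only_edge_branches.
rewrite cover23; apply: (only_edge_attached e_sym _ (@attached_set1 _ e l) attached_pendant lu).
by rewrite setICr.
Qed.

End Branches.

Lemma unsolvable_pendant_split : ~ solvable_in e [set~ l] -> split_path3 e /\ split_X e.
Proof.
move=> unsolv; have uT : u \in [set~ l] by rewrite in_setC1 neighbour_neq_leaf.
have [k Nk [v vT kv]] : exists2 k, null_in e [set~ l] k & exists2 v, v \in [set~ l] & k v <> 0.
  apply: NNPP => none; apply: unsolv => k Nk v vT; apply: NNPP => kv.
  by apply: none; exists k => //; exists v.
have ku : k u = 1.
  case: (F2_cases (k u)) => // ku0.
  by case: kv; apply: (null_in_attached solvT attached_pendant Nk ku0).
have [c [cT uc kc]] := null_in_neighbour uT ku (Nk u uT).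
have cl : c != l by rewrite -in_setC1.
have [C2 [C3 [disj cover uC2 cC3 [t2 t3 att2 att3]]]] := pendant_branches uc cl.
by split; [apply: (@branches_split_path3 c C2 C3 k) | apply: (@branches_split_X c C2 C3 k)].
Qed.

End Pendant.

Lemma always_solvable_tree_split (V : finType) (e : rel V) :
  simple_graph e -> is_tree e -> (2 <= #|V|)%N -> always_solvable e ->
  split_two e \/ split_path3 e /\ split_X e.
Proof.
move=> [e_sym e_irr] [_ [e_conn e_acyc]] card_V /always_solvableP solvT.
have [a [b eab]] := edge_exists e_conn card_V.
have [l [u [lu l_leaf]]] := leaf_exists e_sym e_irr e_acyc eab.
case: (classic (solvable_in e [set~ l])) => [solv | unsolv].
  by left; apply: (solvable_pendant_split_two e_sym e_irr e_acyc e_conn solvT lu l_leaf).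
by right; apply: (unsolvable_pendant_split e_sym e_irr e_acyc e_conn solvT lu l_leaf).
Qed.

Theorem theorem4p7 (V : finType) (e : rel V) :
  simple_graph e -> is_tree e -> (2 <= #|V|)%N ->
  (always_solvable e <-> (split_two e \/ split_path3 e)) /\
  (always_solvable e <-> (split_two e \/ split_X e)).
Proof.
move=> simple_e tree_e card_V; have [e_sym e_irr] := simple_e.
have nec := always_solvable_tree_split simple_e tree_e card_V.
have two := split_two_solvable e_sym e_irr.
split; split.
- by case/nec => [|[]]; [left | right].
- by case; [exact: two | exact: split_path3_solvable].
- by case/nec => [|[]]; [left | right].
- by case; [exact: two | exact: split_X_solvable].
Qed.
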